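(* Let $K$ be a field of characteristic zero and let $F\in K[x]^n$, $x=(x_1,\dots,x_n)$, be a Keller map. Suppose that for each $i$, $F_i=L_iH_i$ with $L_i,H_i\in K[x]$ and $\deg L_i=1$. Write $L=(L_1,\dots,L_n)$ and $L(0)=(L_1(0),\dots,L_n(0))\in K^n$. Then the following are equivalent: 1) for each $i$, the linear part (homogeneous part of degree $1$) of $L_i(0)H_i$ is divisible by $L_i-L_i(0)$; 2) $L(0)$ lies in the column space of the (constant) matrix $\mathcal{J}L$; 3) $\det\mathcal{J}L\in K^{*}$; 4) $\deg F=1$; 5) $F_i$ is irreducible for each $i$.
   Context: $\mathcal{J}$ denotes the Jacobian matrix with respect to $x$. A Keller map is a polynomial map $F\in K[x]^n$ with $\det\mathcal{J}F\in K^{*}$. *)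

From HB Require Import structures.
From mathcomp Require Import all_boot all_order all_algebra.
From mathcomp Require Export mpoly.
Set Implicit Arguments. Unset Strict Implicit. Unset Printing Implicit Defensive.
Import GRing.Theory.
Local Open Scope ring_scope.

(* total degree of a (nonzero) polynomial: msize p = deg p + 1 *)
Definition mdegree (n : nat) (R : nzRingType) (p : {mpoly R[n]}) : nat :=
  (msize p).-1.

Definition map_degree (n : nat) (R : nzRingType) (F : 'I_n -> {mpoly R[n]}) : nat :=
  \max_(i < n) mdegree (F i).

Definition jacobian (n : nat) (R : nzRingType) (F : 'I_n -> {mpoly R[n]}) :
  'M[{mpoly R[n]}]_n := \matrix_(i, j) (F i)^`M(j).

Definition keller (n : nat) (K : fieldType) (F : 'I_n -> {mpoly K[n]}) : Prop :=
  exists2 c : K, c != 0 & \det (jacobian F) = c%:MP.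

Definition mirreducible (n : nat) (K : fieldType) (p : {mpoly K[n]}) : Prop :=
  [/\ p != 0, p \isn't a GRing.unit &
      forall a b : {mpoly K[n]}, p = a * b -> a \is a GRing.unit \/ b \is a GRing.unit].

Definition at0 (n : nat) (R : nzRingType) (p : {mpoly R[n]}) : R :=
  p.@[fun _ => 0].

Definition linpart (n : nat) (R : nzRingType) (p : {mpoly R[n]}) : {mpoly R[n]} :=
  pihomog mdeg 1 p.

(* If [JF(v) = diag(d) JL] at some point [v], invertibility of [JF] forces
   [det JL != 0]; condition 1) yields such a factorisation at the origin and
   condition 2) at a common zero of the [L_i], while 3) says [det JL != 0].
   Conversely, if [JL] is invertible, the affine change of coordinates
   [y = L(x)] turns [F] into the Keller map [(y_i G_i)_i]; conjugating its
   Jacobian by [diag(y)] gives [(delta_ij G_i + y_j dG_i/dy_j)], whose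
   determinant is a nonzero constant. We compare coefficients of this
   determinant at monomials that are dominant for an integer weight: for the
   weight [-1] this shows that the constant terms of the [G_i] are nonzero;
   if some [G_i] were not constant, a weight favouring the exponent [r] of
   maximal [|r|^2 / deg(r)^2] selects leading exponents all proportional to
   [r], and the corresponding coefficient is a product of leading
   coefficients times [det (1 + rank one)], which is nonzero in
   characteristic zero. Hence the [H_i] are constants and [deg F = 1], so the
   [F_i] are irreducible; finally an irreducible [F_i = L_i H_i] forces [H_i]
   to be a unit, i.e. a constant, whose linear part vanishes, giving 1). *)

From HB Require Import structures.
From mathcomp Require Import all_boot all_order all_algebra.
From mathcomp Require Import mpoly.
From mathcomp Require Import perm ring zify.

Set Implicit Arguments.
Unset Strict Implicit.
Unset Printing Implicit Defensive.
Import Order.TTheory GRing.Theory Num.Theory.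
Local Open Scope ring_scope.

Lemma sum_seq_single (T : eqType) (V : nmodType) (r : seq T) (a : T) (F : T -> V) :
  uniq r -> (forall x, x \in r -> x != a -> F x = 0) -> (a \notin r -> F a = 0) ->
  \sum_(x <- r) F x = F a.
Proof.
move=> ur Fr Fa; have [ar|/[dup] nar /Fa ->] := boolP (a \in r).
  by rewrite (bigD1_seq a) //= big1_seq ?addr0 // => x /andP[xa xr]; apply: Fr.
by rewrite big1_seq // => x /andP[_ xr]; apply: Fr => //; apply: contraNneq nar => <-.
Qed.

Section WeightedDominance.
Variables (R : comNzRingType) (n : nat) (w : 'I_n -> int).
Implicit Types (p q : {mpoly R[n]}) (m a b : 'X_{1..n}).

Definition wdeg m : int := \sum_j w j * (m j)%:Z.

Lemma wdegD m1 m2 : wdeg (m1 + m2)%MM = wdeg m1 + wdeg m2.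
Proof. by rewrite /wdeg -big_split; apply: eq_bigr => j _; rewrite mnmDE PoszD mulrDr. Qed.

Lemma wdeg0 : wdeg 0%MM = 0.
Proof. by rewrite /wdeg big1 // => j _; rewrite mnm0E mulr0. Qed.

Definition wdominant p a : bool :=
  all (fun m => (m == a) || (wdeg m < wdeg a)) (msupp p).

Lemma wdominantP p a :
  reflect (forall m, p@_m != 0 -> (m == a) || (wdeg m < wdeg a)) (wdominant p a).
Proof.
by apply: (iffP allP) => h m; [rewrite -mcoeff_msupp|rewrite mcoeff_msupp]; apply: h.
Qed.

Lemma mcoeffM_msupp p q g : (p * q)@_g =
  \sum_(m <- msupp p) \sum_(m' <- msupp q) p@_m * q@_m' * ((m + m')%MM == g)%:R.
Proof.
rewrite {1}(mpolyE p) {1}(mpolyE q) big_distrl raddf_sum; apply: eq_bigr => m _.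
rewrite big_distrr raddf_sum; apply: eq_bigr => m' _ /=.
by rewrite -scalerAl -scalerAr scalerA -mpolyXD mcoeffZ mcoeffX.
Qed.

(* The product of the dominant terms cannot be cancelled by any other pair of
   terms, since all of those have strictly smaller total weight. *)
Lemma wdominantM p q a b : wdominant p a -> wdominant q b ->
  (p * q)@_(a + b) = p@_a * q@_b /\ wdominant (p * q) (a + b).
Proof.
move=> /wdominantP dp /wdominantP dq.
have key m m' : p@_m != 0 -> q@_m' != 0 ->
    (m == a) && (m' == b) || (wdeg (m + m')%MM < wdeg (a + b)%MM).
  move=> /dp /orP[/eqP ->|lt1] /dq /orP[/eqP ->|lt2]; rewrite ?eqxx //= !wdegD.
  - by apply/orP; right; rewrite ltrD2l.
  - by apply/orP; right; rewrite ltrD2r.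
  - by apply/orP; right; apply: ltrD.
have other m m' : p@_m != 0 -> q@_m' != 0 -> ~~ ((m == a) && (m' == b)) ->
    (m + m')%MM != (a + b)%MM.
  move=> pm qm /negbTE nab; apply: contraTneq (key _ _ pm qm) => ->.
  by rewrite nab ltxx.
split.
  rewrite mcoeffM_msupp (@sum_seq_single _ _ _ a) ?msupp_uniq //.
  - rewrite (@sum_seq_single _ _ _ b) ?msupp_uniq ?eqxx ?mulr1 //.
      move=> m'; rewrite mcoeff_msupp => qm m'b.
      have [pa0|pa] := eqVneq p@_a 0; first by rewrite pa0 !mul0r.
      by rewrite (negbTE (other _ _ pa qm _)) ?mulr0 ?(negbTE m'b) ?andbF.
    by rewrite mcoeff_msupp negbK => /eqP ->; rewrite mulr0 ?mul0r.
  - move=> m; rewrite mcoeff_msupp => pm ma; rewrite big1_seq // => m' /andP[_].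
    by rewrite mcoeff_msupp => qm; rewrite (negbTE (other _ _ pm qm _)) ?mulr0 ?(negbTE ma).
  - by rewrite mcoeff_msupp negbK => /eqP pa; rewrite big1 // => m' _; rewrite pa !mul0r.
apply/wdominantP => g; rewrite mcoeffM_msupp; apply: contraNT => /norP[ga gw].
rewrite big1_seq // => m /andP[_]; rewrite mcoeff_msupp => pm.
rewrite big1_seq // => m' /andP[_]; rewrite mcoeff_msupp => qm.
have [e|] := eqVneq (m + m')%MM g; last by rewrite mulr0.
case/orP: (key _ _ pm qm) => [/andP[/eqP ma /eqP mb]|]; first by rewrite -e ma mb eqxx in ga.
by rewrite e (negbTE gw).
Qed.

Lemma wdominant1 : wdominant 1 0%MM.
Proof. by apply/wdominantP => m; rewrite mcoeff1; case: (m == 0%MM); rewrite /= ?eqxx. Qed.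

Lemma wdominant_prod (I : Type) (r : seq I) (P : I -> {mpoly R[n]}) (A : I -> 'X_{1..n}) :
  (forall i, wdominant (P i) (A i)) ->
  (\prod_(i <- r) P i)@_(\sum_(i <- r) A i)%MM = \prod_(i <- r) (P i)@_(A i)
  /\ wdominant (\prod_(i <- r) P i) (\sum_(i <- r) A i)%MM.
Proof.
move=> dom; elim: r => [|i r [IH1 IH2]].
  by rewrite !big_nil mcoeff1 eqxx; split=> //; apply: wdominant1.
by rewrite !big_cons; have [-> ->] := wdominantM (dom i) IH2; rewrite IH1.
Qed.

(* Every term of the Leibniz expansion picks one entry per row, so the row-wise
   dominant exponents single out one coefficient of the determinant. *)
Lemma mcoeff_det_wdominant (M : 'M[{mpoly R[n]}]_n) (A : 'I_n -> 'X_{1..n}) :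
  (forall i j, wdominant (M i j) (A i)) ->
  (\det M)@_(\sum_(i < n) A i)%MM = \det (\matrix_(i, j) (M i j)@_(A i)).
Proof.
move=> dom; rewrite /determinant raddf_sum; apply: eq_bigr => s _ /=.
have -> : forall (b : bool) (p : {mpoly R[n]}) g, ((-1) ^+ b * p)@_g = (-1) ^+ b * p@_g.
  by case=> p g; rewrite ?expr1 ?expr0 ?mulN1r ?mul1r // mcoeffN.
have [-> _] := wdominant_prod (index_enum 'I_n) (fun i => dom i ((s : 'S_n) i)).
by congr (_ * _); apply: eq_bigr => i _; rewrite mxE.
Qed.

End WeightedDominance.

Lemma wdeg_const (n : nat) (k : int) (m : 'X_{1..n}) :
  wdeg (fun _ => k) m = k * (mdeg m)%:Z.
Proof. by rewrite /wdeg mdegE (big_morph Posz PoszD (erefl (Posz 0))) mulr_sumr. Qed.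

Section TorusJacobian.
Variables (R : comNzRingType) (n : nat).
Implicit Types (p : {mpoly R[n]}) (g : 'X_{1..n}).

Lemma mderivXU (k j : 'I_n) : ('X_k : {mpoly R[n]})^`M(j) = (k == j)%:R.
Proof.
rewrite mderivX mnm1E; case: eqP => [->|_]; last by rewrite scale0r.
have -> : (U_(j) - U_(j))%MM = 0%MM by apply/mnmP => l; rewrite mnmBE mnm0E subnn.
by rewrite mpolyX0 scale1r.
Qed.

Lemma mpolyXU_mderiv p (j : 'I_n) :
  'X_j * p^`M(j) = \sum_(m <- msupp p) (p@_m * (m j)%:R) *: 'X_[m].
Proof.
rewrite {1}(mpolyE p) raddf_sum big_distrr; apply: eq_bigr => m _ /=.
rewrite mderivZ mderivX scalerA -scalerAr.
have [->|mj_gt0] := posnP (m j); first by rewrite mulr0n mulr0 !scale0r.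
congr (_ *: _); rewrite -mpolyXD; congr 'X_[_]; apply/mnmP => i.
rewrite mnmDE mnmBE mnm1E; case: eqP => [<-|]; last by rewrite subn0.
by rewrite add1n subn1 prednK.
Qed.

Lemma mcoeff_mpolyXU_mderiv p (j : 'I_n) g : ('X_j * p^`M(j))@_g = p@_g * (g j)%:R.
Proof.
rewrite mpolyXU_mderiv raddf_sum /= (@sum_seq_single _ _ _ g) ?msupp_uniq //.
- by rewrite mcoeffZ mcoeffX eqxx mulr1.
- by move=> m _ mg; rewrite mcoeffZ mcoeffX (negbTE mg) mulr0.
- by rewrite mcoeff_msupp negbK => /eqP ->; rewrite mul0r scale0r mcoeff0.
Qed.

(* [toric_jacobian G] is the Jacobian of [(X_i * G i)_i] conjugated by
   [diag(X)]: the entry [(i, j)] is [X_j * d(X_i G_i)/dX_j / X_i]. *)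
Definition toric_jacobian (G : 'I_n -> {mpoly R[n]}) : 'M[{mpoly R[n]}]_n :=
  \matrix_(i, j) ((i == j)%:R * G i + 'X_j * (G i)^`M(j)).

Lemma mcoeff_toric_jacobian G i j g :
  (toric_jacobian G i j)@_g = (G i)@_g * ((i == j) + g j)%:R.
Proof.
rewrite mxE mcoeffD mcoeff_mpolyXU_mderiv mulr_natl mcoeffMn natrD mulrDr.
by rewrite [in RHS]mulr_natr.
Qed.

Lemma jacobian_mpolyXUM G :
  jacobian (fun i => 'X_i * G i) *m diag_mx (\row_i 'X_i)
  = diag_mx (\row_i 'X_i) *m toric_jacobian G.
Proof.
apply/matrixP => i j; rewrite mul_mx_diag mul_diag_mx !mxE mderivM mderivXU.
have [<-|ij] := eqVneq i j; first by rewrite mulrC.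
by rewrite !mul0r !add0r -mulrA [_ * 'X_j]mulrC.
Qed.

End TorusJacobian.

Section ExponentGeometry.
Variable n : nat.
Implicit Types (r v : 'X_{1..n}).

Definition mnorm2 v : int := \sum_j (v j)%:Z ^+ 2.
Definition mdot r v : int := \sum_j (r j)%:Z * (v j)%:Z.

(* Cauchy-Schwarz for [b r] and [a v], with its equality case. *)
Lemma mdot_le r v (a b : int) : 0 < a -> 0 < b ->
  mnorm2 v * a ^+ 2 <= mnorm2 r * b ^+ 2 ->
  a * mdot r v <= mnorm2 r * b /\
  (a * mdot r v = mnorm2 r * b -> forall j, b * (r j)%:Z = a * (v j)%:Z).
Proof.
move=> a_gt0 b_gt0 le_norm.
have expand : \sum_j (b * (r j)%:Z - a * (v j)%:Z) ^+ 2
    = b ^+ 2 * mnorm2 r - 2%:R * a * b * mdot r v + a ^+ 2 * mnorm2 v.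
  rewrite /mnorm2 /mdot !mulr_sumr -sumrB -big_split /=.
  by apply: eq_bigr => j _; ring.
have sum_ge0 : 0 <= \sum_j (b * (r j)%:Z - a * (v j)%:Z) ^+ 2.
  by apply: sumr_ge0 => j _; apply: sqr_ge0.
rewrite expand in sum_ge0; split; first by nia.
move=> eq_dot j; have : \sum_j (b * (r j)%:Z - a * (v j)%:Z) ^+ 2 == 0.
  by rewrite eq_le expand; apply/andP; split; nia.
rewrite psumr_eq0 => [|k _]; last exact: sqr_ge0.
move=> /allP /(_ j (mem_index_enum _)) /=.
by rewrite sqrf_eq0 subr_eq0 => /eqP.
Qed.

End ExponentGeometry.

Lemma det_add1_mul_neq0 (K : fieldType) n (U : 'cV[K]_n) (V : 'rV[K]_n) :
  1 + (V *m U) 0 0 != 0 -> \det (1%:M + U *m V) != 0.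
Proof.
move=> h; set s := (V *m U) 0 0; set t := (1 + s)^-1.
have UVUV : U *m V *m (U *m V) = s *: (U *m V).
  by rewrite mulmxA -(mulmxA U V U) [V *m U]mx11_scalar mul_mx_scalar -scalemxAl.
have tUV : t *: (U *m V) + (t * s) *: (U *m V) = U *m V.
  by rewrite -scalerDl -{1}(mulr1 t) -mulrDr mulVf // scale1r.
have inv : (1%:M + U *m V) *m (1%:M - t *: (U *m V)) = 1%:M.
  rewrite mulmxDl mul1mx mulmxBr mulmx1 -scalemxAr UVUV scalerA.
  by rewrite -[X in _ + (X - _)]tUV addrK subrK.
apply/negP => /eqP det0; have := congr1 determinant inv.
by rewrite det_mulmx det0 mul0r det1 => /eqP; rewrite eq_sym oner_eq0.
Qed.

Lemma exists_argmax_seq (R : realDomainType) (T : eqType) (s : seq T) (f : T -> R) x0 :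
  x0 \in s -> exists2 r, r \in s & forall v, v \in s -> f v <= f r.
Proof.
elim: s x0 => // x s IH x0 _; case: s IH => [_|y s IH].
  by exists x; rewrite ?mem_seq1 // => v; rewrite mem_seq1 => /eqP ->.
have [z zs fz] := IH y (mem_head _ _).
have [le_xz|lt_zx] := leP (f x) (f z).
  by exists z; rewrite 1?inE ?zs ?orbT // => v; rewrite inE => /orP[/eqP ->|/fz].
exists x; first exact: mem_head.
by move=> v; rewrite inE => /orP[/eqP ->//|/fz fv]; apply: le_trans fv (ltW lt_zx).
Qed.

Section ToricKeller.
Variables (K : fieldType) (n : nat) (G : 'I_n -> {mpoly K[n]}) (c : K).
Hypotheses (K_char0 : [pchar K] =i pred0) (c_neq0 : c != 0).
Hypothesis det_toric : \det (toric_jacobian G) = c%:MP.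

Lemma wdominant_toric_jacobian w i j a :
  wdominant w (G i) a -> wdominant w (toric_jacobian G i j) a.
Proof.
move=> /wdominantP dom; apply/wdominantP => m; rewrite mcoeff_toric_jacobian.
by move=> nz; apply: dom; apply: contraNneq nz => ->; rewrite mul0r.
Qed.

(* For the weight [-1] the constant term of every entry is dominant. *)
Lemma toric_coeff0_neq0 i : (G i)@_0 != 0.
Proof.
have dom0 i' : wdominant (fun _ => -1) (G i') 0%MM.
  apply/wdominantP => m _; have [//|m_neq0] := eqVneq m 0%MM.
  by rewrite wdeg_const wdeg0 mulN1r oppr_lt0 ltz_nat lt0n mdeg_eq0.
have := mcoeff_det_wdominant (fun i' j => wdominant_toric_jacobian j (dom0 i')).
rewrite big1 // det_toric mcoeffC eqxx mulr1.
have -> : \matrix_(i', j) (toric_jacobian G i' j)@_0%MM = diag_mx (\row_k (G k)@_0).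
  by apply/matrixP => i' j; rewrite mxE mcoeff_toric_jacobian !mxE mnm0E addn0 mulr_natr.
rewrite det_diag => c_prod; apply: contraNneq c_neq0 => Gi0.
by rewrite c_prod (bigD1 i) //= mxE Gi0 mul0r.
Qed.

Let exps := [seq m <- flatten [seq msupp (G k) | k <- enum 'I_n] | m != 0%MM].

Let mem_exps m : (m \in exps) = (m != 0%MM) && [exists k, m \in msupp (G k)].
Proof.
rewrite mem_filter; congr (_ && _); apply/flatten_mapP/existsP.
  by case=> k _ mk; exists k.
by case=> k mk; exists k; rewrite ?mem_enum.
Qed.

Let slope (m : 'X_{1..n}) : rat := (mnorm2 m)%:~R / ((mdeg m)%:Z ^+ 2)%:~R.

(* [r] is an exponent of maximal slope; the weight [w] below is maximised along
   the ray through [r], and the leading terms it selects make the coefficient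
   matrix of the determinant a rank-one perturbation of a diagonal matrix. *)
Section MaximalSlope.
Variable r : 'X_{1..n}.
Hypotheses (r_exps : r \in exps) (r_max : forall v, v \in exps -> slope v <= slope r).

Let a := mdeg r.
Let S := mnorm2 r.
Let T := (\max_(v <- exps) mdeg v).+1.
Let w (j : 'I_n) : int := T%:Z * (a%:Z * (r j)%:Z - S) + 1.
Let on_ray m := [forall j, (mdeg m)%:Z * (r j)%:Z == a%:Z * (m j)%:Z].

Let a_gt0 : (0 < a)%N.
Proof. by move: r_exps; rewrite mem_exps lt0n mdeg_eq0 => /andP[]. Qed.

Let wdegE m : wdeg w m = T%:Z * (a%:Z * mdot r m - S * (mdeg m)%:Z) + (mdeg m)%:Z.
Proof.
rewrite /wdeg /mdot mdegE (big_morph Posz PoszD (erefl (Posz 0))).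
rewrite !mulr_sumr -sumrB !mulr_sumr -big_split /=.
by apply: eq_bigr => j _; rewrite /w; ring.
Qed.

Let mdot_on_ray m : on_ray m -> a%:Z * mdot r m = S * (mdeg m)%:Z.
Proof.
move=> /forallP on_m.
apply: etrans (_ : \sum_j (mdeg m)%:Z * (r j)%:Z ^+ 2 = _); last by rewrite -mulr_sumr mulrC.
rewrite /mdot mulr_sumr; apply: eq_bigr => j _.
by rewrite mulrCA -(eqP (on_m j)); ring.
Qed.

Let wdeg_on_ray m : on_ray m -> wdeg w m = (mdeg m)%:Z.
Proof. by move=> /mdot_on_ray e; rewrite wdegE e subrr mulr0 add0r. Qed.

Let wdeg_off_ray v : v \in exps -> ~~ on_ray v -> wdeg w v < 0.
Proof.
move=> v_exps off; have v_gt0 : (0 < mdeg v)%N.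
  by move: v_exps; rewrite mem_exps lt0n mdeg_eq0 => /andP[].
have [le_dot eq_dot] : a%:Z * mdot r v <= S * (mdeg v)%:Z /\
    (a%:Z * mdot r v = S * (mdeg v)%:Z -> forall j, (mdeg v)%:Z * (r j)%:Z = a%:Z * (v j)%:Z).
  apply: mdot_le; rewrite ?ltz_nat //.
  have := r_max v_exps; rewrite /slope ler_pdivrMr ?ltr0z ?exprn_gt0 ?ltz_nat //.
  by rewrite mulrAC ler_pdivlMr ?ltr0z ?exprn_gt0 ?ltz_nat // -!intrM ler_int.
have lt_dot : a%:Z * mdot r v < S * (mdeg v)%:Z.
  rewrite lt_neqAle le_dot andbT; apply: contraNneq off => /eq_dot e.
  by apply/forallP => j; rewrite e.
have lt_T : (mdeg v < T)%N by rewrite ltnS (leq_bigmax_seq _ v_exps).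
rewrite wdegE; move: lt_dot; set x := _ * mdot r v; set y := _ * _%:Z.
have : (mdeg v)%:Z < T%:Z by rewrite ltz_nat.
nia.
Qed.

Let on_ray_inj m m' : on_ray m -> on_ray m' -> mdeg m = mdeg m' -> m = m'.
Proof.
move=> /forallP on_m /forallP on_m' eq_deg; apply/mnmP => j.
have a_neq0 : a%:Z != 0 by rewrite eqz_nat -lt0n.
by move/eqP: (on_m j); move/eqP: (on_m' j); rewrite eq_deg => -> /(mulfI a_neq0) [->].
Qed.

Let exists_on_ray_wdominant k :
  exists m, [&& m \in msupp (G k), on_ray m & wdominant w (G k) m].
Proof.
have G0 : 0%MM \in msupp (G k) by rewrite mcoeff_msupp toric_coeff0_neq0.
have on_or_neg m : m \in msupp (G k) -> on_ray m || (wdeg w m < 0).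
  move=> mG; case: (boolP (on_ray m)) => //= off.
  have m_exps : m \in exps; last exact: wdeg_off_ray m_exps off.
  rewrite mem_exps; apply/andP; split; last by apply/existsP; exists k.
  apply: contraNneq off => ->; apply/forallP => j.
  by rewrite mdeg0 mnm0E !mulr0 mul0r.
have [m mG m_max] := exists_argmax_seq (wdeg w) G0.
have m_on : on_ray m.
  case/orP: (on_or_neg m mG) => // neg.
  by have := m_max _ G0; rewrite wdeg0 leNgt neg.
exists m; rewrite mG m_on /=; apply/allP => m' m'G.
have [//|m'_neq] := eqVneq m' m; rewrite /= lt_neqAle m_max // andbT.
apply: contraNneq m'_neq => eq_wdeg.
have m'_on : on_ray m'.
  by case/orP: (on_or_neg m' m'G) => //; rewrite eq_wdeg wdeg_on_ray // => neg; lia.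
apply/eqP/(on_ray_inj m'_on m_on)/eqP.
by rewrite -eqz_nat -(wdeg_on_ray m'_on) -(wdeg_on_ray m_on) eq_wdeg.
Qed.

Lemma no_maximal_slope : False.
Proof.
pose al k := xchoose (exists_on_ray_wdominant k).
have al_spec k : [&& al k \in msupp (G k), on_ray (al k) & wdominant w (G k) (al k)]
  := xchooseP (exists_on_ray_wdominant k).
have [k0 r_Gk0] : exists k, r \in msupp (G k).
  by move: r_exps; rewrite mem_exps => /andP[_ /existsP].
have al_k0_neq0 : al k0 != 0%MM.
  have /and3P[_ _ /wdominantP dom] := al_spec k0.
  apply/eqP => al0; move: (dom r); rewrite -mcoeff_msupp al0 wdeg0.
  rewrite wdeg_on_ray; last by apply/forallP.
  rewrite -mdeg_eq0 -/a => /(_ r_Gk0) /orP[/eqP|]; lia.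
set gam := (\sum_(k < n) al k)%MM.
have gam_neq0 : gam != 0%MM.
  by rewrite -mdeg_eq0 mdeg_sum (bigD1 k0) //= -lt0n ltn_addr // lt0n mdeg_eq0.
have a_neq0 : (a%:R : K) != 0 by move/pcharf0P: K_char0 => ->; rewrite -lt0n.
have alE k j : (al k j)%:R = (mdeg (al k))%:R / a%:R * (r j)%:R :> K.
  have /and3P[_ /forallP /(_ j) /eqP e _] := al_spec k.
  have eN : (mdeg (al k) * r j = a * al k j)%N by apply/eqP; rewrite -eqz_nat !PoszM e.
  by rewrite mulrAC -natrM eN natrM mulrAC divff // mul1r.
have dom i j : wdominant w (toric_jacobian G i j) (al i).
  by apply: wdominant_toric_jacobian; case/and3P: (al_spec i).
have := mcoeff_det_wdominant dom; rewrite det_toric mcoeffC (negbTE gam_neq0) mulr0.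
pose U : 'cV[K]_n := \col_k ((mdeg (al k))%:R / a%:R).
pose W : 'rV[K]_n := \row_j (r j)%:R.
have -> : \matrix_(i, j) (toric_jacobian G i j)@_(al i)
    = diag_mx (\row_k (G k)@_(al k)) *m (1%:M + U *m W).
  apply/matrixP => i j; rewrite mul_diag_mx mxE mcoeff_toric_jacobian !mxE big_ord1 !mxE.
  by rewrite natrD alE.
apply/eqP; rewrite eq_sym det_mulmx det_diag mulf_neq0 //.
  by apply/prodf_neq0 => k _; rewrite mxE -mcoeff_msupp; case/and3P: (al_spec k).
apply: det_add1_mul_neq0; rewrite mxE (eq_bigr (fun j => (al j j)%:R)); last first.
  by move=> j _; rewrite !mxE mulrC -alE.
by rewrite -natr_sum nat1r; move/pcharf0P: K_char0 => ->.
Qed.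

End MaximalSlope.

Lemma toric_jacobian_const i : G i = ((G i)@_0)%:MP.
Proof.
apply/mpolyP => m; rewrite mcoeffC; have [->|m_neq0] := eqVneq m 0%MM; first by rewrite mulr1.
rewrite mulr0; apply/eqP; apply: contraT; rewrite -mcoeff_msupp => mG.
have m_exps : m \in exps by rewrite mem_exps m_neq0; apply/existsP; exists i.
have [r r_exps r_max] := exists_argmax_seq slope m_exps.
by case: (no_maximal_slope r_exps r_max).
Qed.

End ToricKeller.

Section ChainRule.
Variables (R : comNzRingType) (n : nat).
Implicit Types (p q : {mpoly R[n]}) (lq lr : n.-tuple {mpoly R[n]}).

Lemma comp_mpolyA p lq lr :
  (p \mPo lq) \mPo lr = p \mPo [tuple tnth lq i \mPo lr | i < n].
Proof.
rewrite (comp_mpolyE p lq) (comp_mpolyE p) raddf_sum; apply: eq_bigr => m _.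
rewrite /= comp_mpolyZ rmorph_prod; congr (_ *: _); apply: eq_bigr => i _.
by rewrite rmorphXn tnth_mktuple.
Qed.

Lemma mderiv_comp p lq j :
  (p \mPo lq)^`M(j) = \sum_k (p^`M(k) \mPo lq) * (tnth lq k)^`M(j).
Proof.
pose chain p := (p \mPo lq)^`M(j) = \sum_k (p^`M(k) \mPo lq) * (tnth lq k)^`M(j).
have chain0 : chain 0.
  by rewrite /chain comp_mpoly0 mderiv0 big1 // => k _; rewrite mderiv0 comp_mpoly0 mul0r.
have chain1 : chain 1.
  rewrite /chain comp_mpoly1 -mpolyC1 mderivC big1 // => k _.
  by rewrite mderivC comp_mpolyC mpolyC0 mul0r.
have chainD q1 q2 : chain q1 -> chain q2 -> chain (q1 + q2).
  rewrite /chain comp_mpolyD mderivD => -> ->; rewrite -big_split /=.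
  by apply: eq_bigr => k _; rewrite mderivD comp_mpolyD mulrDl.
have chainZ a q : chain q -> chain (a *: q).
  rewrite /chain comp_mpolyZ mderivZ => ->; rewrite scaler_sumr.
  by apply: eq_bigr => k _; rewrite mderivZ comp_mpolyZ scalerAl.
have chainM q1 q2 : chain q1 -> chain q2 -> chain (q1 * q2).
  rewrite /chain rmorphM mderivM => -> ->; rewrite mulr_suml mulr_sumr -big_split /=.
  by apply: eq_bigr => k _; rewrite mderivM comp_mpolyD !rmorphM /=; ring.
have chainX i : chain 'X_i.
  rewrite /chain comp_mpolyXU -tnth_nth (bigD1 i) //= big1 ?addr0.
    by rewrite mderivXU eqxx comp_mpoly1 mul1r.
  by move=> k ki; rewrite mderivXU eq_sym (negbTE ki) comp_mpoly0 mul0r.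
rewrite (mpolyE p); apply: (big_ind chain chain0 chainD) => m _.
apply: chainZ; rewrite mpolyXE_id; apply: (big_ind chain chain1 chainM) => i _.
by elim: (m i) => [|k IH]; rewrite ?expr0 // exprS; apply: chainM.
Qed.

Lemma jacobian_comp (F : 'I_n -> {mpoly R[n]}) lq :
  jacobian (fun i => F i \mPo lq)
  = map_mx (comp_mpoly lq) (jacobian F) *m jacobian (fun k => tnth lq k).
Proof.
by apply/matrixP => i j; rewrite !mxE mderiv_comp; apply: eq_bigr => k _; rewrite !mxE.
Qed.

End ChainRule.

Section PolynomialMaps.
Variables (R : comNzRingType) (n : nat).
Implicit Types (p : {mpoly R[n]}) (m : 'X_{1..n}).

Lemma eq_mnm1 (i k : 'I_n) : (U_(i) == U_(k) :> 'X_{1..n})%MM = (i == k).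
Proof. by apply/eqP/eqP => [/mnmP /(_ i)|->//]; rewrite !mnm1E eqxx; case: eqP. Qed.

Lemma mpoly_affineE p : (msize p <= 2)%N ->
  p = (p@_0)%:MP + \sum_k p@_U_(k) *: 'X_k.
Proof.
move=> size_p; apply/mpolyP => m; rewrite mcoeffD mcoeffC raddf_sum /=.
under eq_bigr do rewrite mcoeffZ mcoeffX.
have [m0|m_neq0] := eqVneq m 0%MM.
  by rewrite m0 mulr1 big1 ?addr0 // => k _; rewrite mnm1_eq0 mulr0.
rewrite mulr0 add0r; have [/mdeg1P[i /eqP ->]|deg_m] := boolP (mdeg m == 1%N).
  rewrite (bigD1 i) //= eqxx mulr1 big1 ?addr0 // => k ki.
  by rewrite eq_mnm1 (negbTE ki) mulr0.
rewrite big1 => [|k _]; last first.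
  by case: eqP => [e|]; [move: deg_m; rewrite -e mdeg1 | rewrite mulr0].
apply/eqP; rewrite mcoeff_eq0 msize_mdeg_ge // (leq_trans size_p) //.
by move: deg_m m_neq0; rewrite -mdeg_eq0; case: (mdeg m) => [|[|]].
Qed.

Lemma mderiv_affine p j : (msize p <= 2)%N -> p^`M(j) = (p@_U_(j))%:MP.
Proof.
move=> size_p; rewrite {1}(mpoly_affineE size_p) mderivD mderivC add0r raddf_sum /=.
rewrite (bigD1 j) //= big1 ?addr0.
  by rewrite mderivZ mderivXU eqxx -mul_mpolyC mulr1.
by move=> k kj; rewrite mderivZ mderivXU (negbTE kj) scaler0.
Qed.

Lemma meval_affine p v : (msize p <= 2)%N ->
  p.@[v] = p@_0 + \sum_k p@_U_(k) * v k.
Proof.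
move=> size_p; rewrite {1}(mpoly_affineE size_p) mevalD mevalC raddf_sum /=.
by congr (_ + _); apply: eq_bigr => k _; rewrite mevalZ mevalXU.
Qed.

Lemma meval0E p : p.@[fun _ => 0] = p@_0.
Proof.
have zero_pow m : \prod_i (0 : R) ^+ m i = (m == 0%MM)%:R.
  have [->|/eqP m_neq0] := eqVneq m 0%MM; first by rewrite big1 // => i _; rewrite mnm0E.
  have [/forallP m0|/forallPn [i mi]] := boolP [forall i, m i == 0%N].
    by case: m_neq0; apply/mnmP => i; rewrite mnm0E; apply/eqP.
  by rewrite (bigD1 i) //= expr0n (negbTE mi) mul0r.
rewrite mevalE (@sum_seq_single _ _ _ 0%MM) ?msupp_uniq ?zero_pow ?eqxx ?mulr1 //.
  by move=> m _ m0; rewrite zero_pow (negbTE m0) mulr0.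
by rewrite mcoeff_msupp negbK => /eqP ->; rewrite ?mul0r.
Qed.

Lemma meval0_mderiv p j : (p^`M(j)).@[fun _ => 0] = p@_U_(j).
Proof. by rewrite meval0E mcoeff_mderiv add0m mnm0E mulr1n. Qed.

Lemma mcoeff_linpart p j : (linpart p)@_U_(j) = p@_U_(j).
Proof.
rewrite /linpart pihomogE big_mkcond raddf_sum /=.
rewrite (@sum_seq_single _ _ _ U_(j)%MM) ?msupp_uniq ?mdeg1 ?eqxx //=.
- by rewrite mcoeffZ mcoeffX eqxx mulr1.
- move=> m _ mj; case: ifP => _; last by rewrite mcoeff0.
  by rewrite mcoeffZ mcoeffX (negbTE mj) mulr0.
- by rewrite mcoeff_msupp negbK => /eqP ->; rewrite scale0r mcoeff0.
Qed.

Lemma linpart_mpolyC c : linpart (c%:MP : {mpoly R[n]}) = 0.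
Proof.
rewrite /linpart pihomogE msuppC; case: (c == 0); first by rewrite big_nil.
by rewrite big_mkcond big_seq1 /= mdeg0.
Qed.

Lemma mpolyXU_neq0 (i : 'I_n) : ('X_i : {mpoly R[n]}) != 0.
Proof. by rewrite -msize_poly_eq0 msizeX mdeg1. Qed.

Lemma eq_jacobian (F1 F2 : 'I_n -> {mpoly R[n]}) : F1 =1 F2 -> jacobian F1 = jacobian F2.
Proof. by move=> eqF; apply/matrixP => i j; rewrite !mxE eqF. Qed.

Lemma sum_scale_mulmx (A B : 'M[R]_n) (Y : 'I_n -> {mpoly R[n]}) i :
  A *m B = 1%:M -> \sum_k A i k *: \sum_j B k j *: Y j = Y i.
Proof.
move=> AB1; transitivity (\sum_j (A *m B) i j *: Y j).
  under eq_bigr do rewrite scaler_sumr.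
  rewrite exchange_big /=; apply: eq_bigr => j _; rewrite mxE scaler_suml.
  by apply: eq_bigr => k _; rewrite scalerA.
rewrite AB1 (bigD1 i) //= big1 ?addr0 => [|j ji]; first by rewrite mxE eqxx scale1r.
by rewrite mxE eq_sym (negbTE ji) scale0r.
Qed.

End PolynomialMaps.

Section FieldCoefficients.
Variables (K : fieldType) (n : nat).
Implicit Types (p : {mpoly K[n]}).

Lemma mpoly_unit_const p : p \is a GRing.unit -> p = (p@_0)%:MP.
Proof. by rewrite unfold_in /= /mpoly_unit => /andP[/eqP]. Qed.

Lemma msize_unit p : p \is a GRing.unit -> (msize p <= 1)%N.
Proof. by move/mpoly_unit_const => ->; rewrite msizeC; case: (_ != 0). Qed.

Lemma msize1_unit p : msize p = 1%N -> p \is a GRing.unit.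
Proof. by move/eqP/msize_poly1P => [c c_neq0 ->]; apply: rmorph_unit; rewrite unitfE. Qed.

Lemma keller_msize_gt1 (F : 'I_n -> {mpoly K[n]}) i : keller F -> (1 < msize (F i))%N.
Proof.
move=> [c c_neq0 detF]; rewrite ltnNge; apply/negP => /msize1_polyC Fi_const.
move: detF; rewrite (expand_det_row _ i) big1 => [/esym /eqP|j _].
  by rewrite mpolyC_eq0 (negbTE c_neq0).
by rewrite mxE Fi_const mderivC mul0r.
Qed.

End FieldCoefficients.

Section KellerProductOfAffine.
Variables (K : fieldType) (n : nat) (F L H : 'I_n -> {mpoly K[n]}).
Hypotheses (F_keller : keller F) (FE : forall i, F i = L i * H i).
Hypothesis L_deg1 : forall i, mdegree (L i) = 1%N.

Let msizeL i : msize (L i) = 2%N.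
Proof. by move: (L_deg1 i); rewrite /mdegree; case: (msize (L i)) => [|[|[|]]]. Qed.

Let msizeL_le2 i : (msize (L i) <= 2)%N.
Proof. by rewrite msizeL. Qed.

Definition JL : 'M[K]_n := \matrix_(i, k) (L i)@_U_(k).

Lemma jacobianL : jacobian L = map_mx (@mpolyC n K) JL.
Proof. by apply/matrixP => i j; rewrite !mxE mderiv_affine. Qed.

Lemma meval_jacobianF v i j : (map_mx (meval v) (jacobian F)) i j
  = JL i j * (H i).@[v] + (L i).@[v] * ((H i)^`M(j)).@[v].
Proof. by rewrite !mxE FE mderivM mevalD !mevalM mderiv_affine // mevalC. Qed.

(* [JF] is invertible at every point since [F] is Keller. *)
Lemma det_JL_neq0_at v (d : 'rV[K]_n) :
  map_mx (meval v) (jacobian F) = diag_mx d *m JL -> \det JL != 0.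
Proof.
move=> JFv; have [c c_neq0 detF] := F_keller.
have := det_map_mx (meval v) (jacobian F).
rewrite JFv detF /= mevalC det_mulmx det_diag => c_prod.
by apply: contraNneq c_neq0 => det0; rewrite -c_prod det0 mulr0.
Qed.

(* At the origin, condition 1) makes the gradient of [L_i(0) H_i] a multiple
   of the gradient of [L_i]. *)
Lemma det_JL_neq0_of_linpart :
  (forall i, exists q, linpart ((at0 (L i))%:MP * H i) = q * (L i - (at0 (L i))%:MP)) ->
  \det JL != 0.
Proof.
move=> lin_dvd.
have grad i : exists b : K, forall j,
    at0 (L i) * ((H i)^`M(j)).@[fun _ => 0] = b * JL i j.
  have [q e] := lin_dvd i; exists q.@[fun _ => 0] => j.
  rewrite meval0_mderiv -mcoeffCM -mcoeff_linpart e -meval0_mderiv mderivM mevalD !mevalM.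
  rewrite mderivB mderivC subr0 [(L i)^`M(j)]mderiv_affine // mevalC mevalB mevalC.
  by rewrite /at0 subrr mulr0 add0r mxE.
have [b bE] : exists b : 'I_n -> K, forall i j,
    at0 (L i) * ((H i)^`M(j)).@[fun _ => 0] = b i * JL i j.
  by have /fin_all_exists[b bE] := grad; exists b.
apply: (@det_JL_neq0_at (fun _ => 0) (\row_i ((H i).@[fun _ => 0] + b i))).
apply/matrixP => i j; rewrite meval_jacobianF mul_diag_mx !mxE.
by rewrite bE ?mxE; ring.
Qed.

Lemma det_JL_neq0_of_colspace :
  (exists v : 'cV[K]_n, jacobian L *m map_mx (@mpolyC n K) v = \col_i (at0 (L i))%:MP) ->
  \det JL != 0.
Proof.
move=> [v]; rewrite jacobianL -map_mxM => JLv.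
have JLvE i : (JL *m v) i 0 = (L i)@_0.
  move/matrixP: JLv => /(_ i 0); rewrite !mxE /at0 meval0E.
  by move/(congr1 (mcoeff 0%MM)); rewrite !mcoeffC eqxx !mulr1.
pose root k := - v k 0.
have L_root i : (L i).@[root] = 0.
  rewrite meval_affine // -JLvE mxE -big_split big1 // => k _.
  by rewrite /root !mxE mulrN /= subrr.
apply: (@det_JL_neq0_at root (\row_i (H i).@[root])); apply/matrixP => i j.
by rewrite meval_jacobianF mul_diag_mx !mxE L_root mul0r addr0 mulrC.
Qed.

Lemma det_jacobianL : \det (jacobian L) = (\det JL)%:MP.
Proof. by rewrite jacobianL det_map_mx. Qed.

Lemma colspace_of_det_JL_neq0 : \det JL != 0 ->
  exists v : 'cV[K]_n, jacobian L *m map_mx (@mpolyC n K) v = \col_i (at0 (L i))%:MP.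
Proof.
move=> detJL; exists (invmx JL *m \col_i (L i)@_0).
have JL_unit : JL \in unitmx by rewrite unitmxE unitfE.
rewrite jacobianL -map_mxM mulmxA mulmxV // mul1mx; apply/matrixP => i j.
by rewrite !mxE /at0 meval0E.
Qed.

Lemma irreducible_of_map_degree1 : map_degree F = 1%N -> forall i, mirreducible (F i).
Proof.
move=> degF i; have size_gt1 := keller_msize_gt1 i F_keller.
have size_le2 : (msize (F i) <= 2)%N.
  have := @leq_bigmax _ (fun k => mdegree (F k)) i; rewrite -/(map_degree F) degF /mdegree.
  by case: (msize (F i)) => [|[|[|]]].
have sizeF : msize (F i) = 2%N by apply/eqP; rewrite eqn_leq size_le2 size_gt1.
split; first by rewrite -msize_poly_eq0 sizeF.
  by apply/negP => /msize_unit; rewrite sizeF.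
move=> p q Fpq; have [p0|p_neq0] := eqVneq p 0; first by move: sizeF; rewrite Fpq p0 mul0r msize0.
have [q0|q_neq0] := eqVneq q 0; first by move: sizeF; rewrite Fpq q0 mulr0 msize0.
have := msizeM p_neq0 q_neq0; rewrite -Fpq sizeF => sizeM.
have p_gt0 : (0 < msize p)%N by rewrite lt0n msize_poly_eq0.
have q_gt0 : (0 < msize q)%N by rewrite lt0n msize_poly_eq0.
have [p1|p_neq1] := eqVneq (msize p) 1%N; first by left; apply: msize1_unit.
by right; apply: msize1_unit; move: (msize p) (msize q) sizeM p_gt0 q_gt0 p_neq1 => x y; lia.
Qed.

Lemma linpart_of_irreducible : (forall i, mirreducible (F i)) ->
  forall i, exists q, linpart ((at0 (L i))%:MP * H i) = q * (L i - (at0 (L i))%:MP).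
Proof.
move=> irrF i; have [_ _ /(_ _ _ (FE i))] := irrF i.
case=> [/msize_unit|/mpoly_unit_const ->]; first by rewrite msizeL.
by exists 0; rewrite mul0r -rmorphM linpart_mpolyC.
Qed.

Section AffineChangeOfCoordinates.
Hypothesis detJL : \det JL != 0.

Let B := invmx JL.

Let JL_unit : JL \in unitmx.
Proof. by rewrite unitmxE unitfE. Qed.

Let lq := [tuple \sum_j B k j *: ('X_j - ((L j)@_0)%:MP) | k < n].

Lemma L_comp_inverse i : L i \mPo lq = 'X_i.
Proof.
rewrite {1}(mpoly_affineE (msizeL_le2 i)) comp_mpolyD comp_mpolyC raddf_sum /=.
rewrite (eq_bigr (fun k => JL i k *: \sum_j B k j *: ('X_j - ((L j)@_0)%:MP))).
  by rewrite sum_scale_mulmx ?mulmxV // addrC subrK.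
by move=> k _; rewrite comp_mpolyZ comp_mpolyXU -tnth_nth tnth_mktuple mxE.
Qed.

Lemma inverse_comp_L k : tnth lq k \mPo [tuple L j | j < n] = 'X_k.
Proof.
rewrite tnth_mktuple raddf_sum /=.
rewrite (eq_bigr (fun j => B k j *: \sum_m JL j m *: 'X_m)).
  by rewrite sum_scale_mulmx ?mulVmx.
move=> j _; rewrite comp_mpolyZ comp_mpolyB comp_mpolyC comp_mpolyXU -tnth_nth tnth_mktuple.
rewrite {1}(mpoly_affineE (msizeL_le2 j)) addrC addKr; congr (_ *: _).
by apply: eq_bigr => m _; rewrite mxE.
Qed.

Lemma jacobian_inverse : jacobian (fun k => tnth lq k) = map_mx (@mpolyC n K) B.
Proof.
apply/matrixP => k j; rewrite !mxE tnth_mktuple raddf_sum /= (bigD1 j) //= big1 ?addr0.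
  by rewrite mderivZ mderivB mderivC subr0 mderivXU eqxx -mul_mpolyC mulr1.
by move=> l lj; rewrite mderivZ mderivB mderivC subr0 mderivXU (negbTE lj) scaler0.
Qed.

(* In the coordinates [y = L(x)] the map [F] becomes [(y_i G_i)_i], still Keller. *)
Lemma H_const (K_char0 : [pchar K] =i pred0) i : H i = ((H i \mPo lq)@_0)%:MP.
Proof.
pose G k := H k \mPo lq.
have [c c_neq0 detF] := F_keller.
have detXG : \det (jacobian (fun i => 'X_i * G i)) = (c * \det B)%:MP.
  rewrite -(@eq_jacobian _ _ (fun i => F i \mPo lq)) => [|j]; last first.
    by rewrite FE rmorphM /= L_comp_inverse.
  by rewrite jacobian_comp det_mulmx det_map_mx detF /= comp_mpolyC jacobian_inverse
    det_map_mx rmorphM.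
have detT : \det (toric_jacobian G) = (c * \det B)%:MP.
  have detX : \det (diag_mx (\row_i ('X_i : {mpoly K[n]}))) != 0.
    by rewrite det_diag; apply/prodf_neq0 => j _; rewrite mxE mpolyXU_neq0.
  have := congr1 determinant (jacobian_mpolyXUM G); rewrite !det_mulmx detXG.
  by rewrite mulrC => /(mulfI detX) <-.
have cB_neq0 : c * \det B != 0 by rewrite mulf_neq0 // det_inv invr_eq0.
have G_const := toric_jacobian_const K_char0 cB_neq0 detT i.
rewrite -{1}[H i]comp_mpoly_id.
have <- : [tuple tnth lq k \mPo [tuple L j | j < n] | k < n] = [tuple 'X_k | k < n].
  by apply: eq_mktuple => k; apply: inverse_comp_L.
by rewrite -comp_mpolyA; move: G_const; rewrite /G => {1}->; rewrite comp_mpolyC.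
Qed.

End AffineChangeOfCoordinates.

Lemma map_degree1_of_det_JL_neq0 :
  [pchar K] =i pred0 -> (0 < n)%N -> \det JL != 0 -> map_degree F = 1%N.
Proof.
move=> K_char0 n_gt0 detJL.
have size_le2 i : (msize (F i) <= 2)%N.
  by rewrite FE (H_const detJL K_char0 i) mulrC mul_mpolyC (leq_trans (msizeZ_le _ _)).
apply/eqP; rewrite eqn_leq; apply/andP; split.
  apply/bigmax_leqP => i _; rewrite /mdegree.
  by move: (size_le2 i); case: (msize (F i)) => [|[|[|]]].
apply: leq_trans (@leq_bigmax _ (fun k => mdegree (F k)) (Ordinal n_gt0)); rewrite /mdegree.
by move: (keller_msize_gt1 (Ordinal n_gt0) F_keller); case: (msize _) => [|[|]].
Qed.

End KellerProductOfAffine.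

Theorem theorem2p3 (K : fieldType) (n : nat)
  (F L H : 'I_n -> {mpoly K[n]}) :
  [pchar K] =i pred0 ->
  (0 < n)%N ->
  keller F ->
  (forall i, F i = L i * H i) ->
  (forall i, mdegree (L i) = 1%N) ->
  [<-> (forall i, exists q : {mpoly K[n]},
           linpart ((at0 (L i))%:MP * H i) = q * (L i - (at0 (L i))%:MP));
       (exists v : 'cV[K]_n,
           jacobian L *m map_mx (@mpolyC n K) v
           = \col_i (at0 (L i))%:MP);
       (exists2 c : K, c != 0 & \det (jacobian L) = c%:MP);
       map_degree F = 1%N;
       (forall i, mirreducible (F i))].
Proof.
move=> K_char0 n_gt0 F_keller FE L_deg1.
have detJL_unit : (exists2 c : K, c != 0 & \det (jacobian L) = c%:MP) <-> \det (JL L) != 0.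
  rewrite (det_jacobianL L_deg1); split=> [[c c_neq0 /(can_inj (@mpolyCK _ _)) -> //]|].
  by exists (\det (JL L)).
tfae.
- by move/(det_JL_neq0_of_linpart F_keller FE L_deg1)/(colspace_of_det_JL_neq0 L_deg1).
- by move/(det_JL_neq0_of_colspace F_keller FE L_deg1)/detJL_unit.
- by move/detJL_unit; apply: map_degree1_of_det_JL_neq0.
- exact: irreducible_of_map_degree1.
- exact: linpart_of_irreducible.
Qed.
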